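(* For all integers $n\ge1$, $$\prod_{k=1}^n(1+z^k)=\prod_{j=1}^n\bigl(\phi_{2j}(z)\bigr)^{\lfloor\frac{n+j}{2j}\rfloor},$$ where $\phi_m(z)$ denotes the $m$th cyclotomic polynomial. *)

From mathcomp Require Import all_boot all_algebra all_field.

From mathcomp Require Import all_boot all_algebra all_field.
From mathcomp Require Import zify ring.
Import GRing.Theory.
Local Open Scope ring_scope.

(* Since 'X^(2m) - 1 = ('X^m - 1)(1 + 'X^m), the factorisation of both binomials into
   cyclotomic polynomials gives 1 + 'X^m as the product of the 'Phi_d with d | 2m and
   d not dividing m; these are exactly the d = 2j with 2j | m + j.  Multiplying over
   m = 1 .. n, the factor 'Phi_(2j) occurs once for every m <= n with m = j mod 2j,
   i.e. (n + j) %/ (2j) times. *)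

Section BigNat.

Context {R : Type} {idx : R} (op : Monoid.com_law idx).

Lemma big_nat_double (F : nat -> R) k :
  \big[op/idx]_(0 <= d < 2 * k) F d =
  op (\big[op/idx]_(0 <= j < k) F (2 * j)%N) (\big[op/idx]_(0 <= j < k) F (2 * j).+1).
Proof.
elim: k => [|k IHk]; first by rewrite !big_geq // Monoid.mul1m.
rewrite mulnS !addSn add0n !big_nat_recr //= IHk.
by rewrite [RHS]Monoid.mulmACA Monoid.mulmA.
Qed.

Lemma big_divisors_nat (F : nat -> R) n N : (0 < n)%N -> (n < N)%N ->
  \big[op/idx]_(d <- divisors n) F d = \big[op/idx]_(0 <= d < N | (d %| n)%N) F d.
Proof.
move=> n_gt0 lt_nN; rewrite -[RHS]big_filter; apply: perm_big.
apply: uniq_perm; [exact: divisors_uniq | exact/filter_uniq/iota_uniq |] => d.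
rewrite mem_filter -dvdn_divisors // mem_index_iota /=.
by case: (boolP (d %| n)%N) => //= /(dvdn_leq n_gt0)/leq_ltn_trans->.
Qed.

End BigNat.

Lemma Xn_sub1_Cyclotomic n N : (0 < n)%N -> (n < N)%N ->
  'X^n - 1 = \prod_(0 <= d < N | (d %| n)%N) 'Phi_d.
Proof.
by move=> n_gt0 lt_nN; rewrite -prod_Cyclotomic // (big_divisors_nat _ _ _ _ n_gt0 lt_nN).
Qed.

Lemma Xn_add1_Cyclotomic m : (0 < m)%N ->
  1 + 'X^m = \prod_(0 <= d < 2 * m.+1 | (d %| 2 * m)%N && ~~ (d %| m)%N) 'Phi_d.
Proof.
move=> m_gt0; have m2_gt0 : (0 < 2 * m)%N by lia.
have Xm_sub1_neq0 : 'X^m - 1 != 0 :> {poly int}.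
  by apply: monic_neq0; rewrite -[1]/(1%:P); apply: monicXnsubC.
apply: (mulfI Xm_sub1_neq0).
have -> : ('X^m - 1) * (1 + 'X^m) = 'X^(2 * m) - 1 :> {poly int}.
  by rewrite mul2n -addnn exprD; ring.
rewrite (Xn_sub1_Cyclotomic _ _ m2_gt0 (_ : 2 * m < 2 * m.+1)%N); last by lia.
rewrite (bigID (fun d => d %| m)%N) /=; congr (_ * _).
rewrite (Xn_sub1_Cyclotomic _ _ m_gt0 (_ : m < 2 * m.+1)%N); last by lia.
by apply: eq_bigl => d; case: (boolP (d %| m)%N) => [/dvdn_mull->|]; rewrite ?andbF.
Qed.

Lemma dvdn_double_add m j : (0 < m)%N ->
  ((2 * j %| 2 * m) && ~~ (2 * j %| m))%N = (2 * j %| m + j)%N.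
Proof.
move=> m_gt0; case: j => [|j]; first by rewrite muln0 addn0 !dvd0n; lia.
rewrite dvdn_pmul2l //; case: (boolP (j.+1 %| m)%N) => [/dvdnP[q ->] | not_jm] /=.
  by rewrite -mulSnr !dvdn_pmul2r // !dvdn2 /= negbK.
apply/esym/negP => /(dvdn_trans (dvdn_mull 2 (dvdnn j.+1))).
by rewrite dvdn_addl // (negbTE not_jm).
Qed.

Lemma Xn_add1_Cyclotomic_even m : (0 < m)%N ->
  1 + 'X^m = \prod_(1 <= j < m.+1) 'Phi_(2 * j) ^+ (2 * j %| m + j)%N.
Proof.
move=> m_gt0; rewrite Xn_add1_Cyclotomic // big_mkcond big_nat_double /=.
have odd_factors_trivial j : ((2 * j).+1 %| 2 * m)%N = ((2 * j).+1 %| m)%N.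
  by rewrite Gauss_dvdr // coprime_sym coprime2n /= oddM.
rewrite [X in _ * X]big1 ?mulr1 => [|j _]; last by rewrite odd_factors_trivial andbN.
rewrite big_ltn // Cyclotomic0 if_same mul1r; apply: eq_bigr => j _.
by rewrite dvdn_double_add //; case: ifP.
Qed.

Lemma divn_step_add n j : (0 < j)%N ->
  ((n.+1 + j) %/ (2 * j) = (2 * j %| n.+1 + j) + (n + j) %/ (2 * j))%N.
Proof. by move=> j_gt0; rewrite addSn divnS //; lia. Qed.

Lemma prod_1addXn_Cyclotomic n :
  \prod_(1 <= k < n.+1) (1 + 'X^k : {poly int}) =
  \prod_(1 <= j < n.+1) 'Phi_(2 * j) ^+ ((n + j) %/ (2 * j)).
Proof.
elim: n => [|n IHn]; first by rewrite !big_geq.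
rewrite big_nat_recr //= IHn Xn_add1_Cyclotomic_even // mulrC.
rewrite [RHS](eq_big_nat _ _ (F2 := fun j =>
    'Phi_(2 * j) ^+ (2 * j %| n.+1 + j)%N * 'Phi_(2 * j) ^+ ((n + j) %/ (2 * j)))); last first.
  by move=> j /andP[j_gt0 _]; rewrite -exprD divn_step_add.
rewrite big_split /= [X in _ = _ * X]big_nat_recr //=.
have lt_half : (n + n.+1 < 2 * n.+1)%N by lia.
by rewrite (divn_small lt_half) expr0 mulr1.
Qed.

Theorem lemma5 (n : nat) (hn : (1 <= n)%N) :
  \prod_(1 <= k < n.+1) (1 + 'X^k : {poly int}) =
  \prod_(1 <= j < n.+1) ('Phi_(2 * j)) ^+ ((n + j) %/ (2 * j)).
Proof. exact: prod_1addXn_Cyclotomic. Qed.
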